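(* Let $1\le p_0,p_1\le\infty$, let $\varphi$ be an admissible function, and let $\mu$ be an arbitrary measure on a measure space $\mathcal M$. Then for every $\mu$-measurable function $f$ and every $t>0$, $$ \big(R_{p_0,p_1,\varphi}(f^*_\mu)\big)^{**}(t)=R_{p_0,p_1,\varphi}(f^{**}_\mu)(t). $$
   Context: A function $\varphi:[1,\infty]\to[1,\infty]$ is admissible if $\varphi(1)=1$, $\varphi$ is log-concave on $[1,\infty)$, and there exist $\gamma,\beta>0$ with $\gamma/x\le\varphi'(x)/\varphi(x)\le\beta/x$ for all $x\ge1$. For a $\mu$-measurable $f$, the distribution function is $\lambda^\mu_f(y)=\mu(\{x:|f(x)|>y\})$, the decreasing rearrangement is $f^*_\mu(t)=\inf\{y>0:\lambda^\mu_f(y)\le t\}$, and $f^{**}_\mu(t)=\frac1t\int_0^t f^*_\mu(s)\,ds$, $t>0$. For a measurable function $g$ on $(0,\infty)$ (Lebesgue measure), $g^*$ and $g^{**}(t)=\frac1t\int_0^t g^*(s)\,ds$ are defined in the same way. For a positive measurable function $g$ on $(0,\infty)$ and $t>0$ (with $1/\infty=0$): $P_{p_0,\varphi}g(t)=t^{-1/p_0}\int_0^t\varphi\big(1-\log\frac st\big)g(s)\,\frac{ds}{s^{1-1/p_0}}$, $Q_{p_1}g(t)=t^{-1/p_1}\int_t^\infty g(s)\,\frac{ds}{s^{1-1/p_1}}$, and $R_{p_0,p_1,\varphi}g=P_{p_0,\varphi}g+Q_{p_1}g$. *)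

From HB Require Import structures.
From mathcomp Require Import all_boot all_order all_algebra.
From mathcomp Require Import all_classical all_reals all_analysis.
Set Implicit Arguments. Unset Strict Implicit. Unset Printing Implicit Defensive.
Import Order.TTheory GRing.Theory Num.Theory.
Import numFieldNormedType.Exports.
Local Open Scope classical_set_scope.
Local Open Scope ring_scope.

(* 1/p for p in [1, +oo], with the convention 1/oo = 0 *)
Definition invp {R : realType} (p : \bar R) : R :=
  match p with EFin r => r^-1 | _ => 0 end.

(* Admissible function phi : [1,oo) -> [1,oo) (phi(oo) is never used below).
   phi' at x = 1 is understood as a right derivative. *)
Definition admissible {R : realType} (phi : R -> R) : Prop :=
  phi 1 = 1 /\
  (forall x, 1 <= x -> 1 <= phi x) /\
  (forall x y l, 1 <= x -> 1 <= y -> 0 <= l <= 1 ->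
     l * ln (phi x) + (1 - l) * ln (phi y) <= ln (phi (l * x + (1 - l) * y))) /\
  exists dphi : R -> R,
    (forall x : R, 1 < x -> is_derive x (1 : R) phi (dphi x)) /\
    ((fun h : R => h^-1 * (phi (1 + h) - phi 1)) @ (0:R)^'+ --> dphi 1) /\
    exists gamma beta : R, 0 < gamma /\ 0 < beta /\
      forall x, 1 <= x -> gamma / x <= dphi x / phi x <= beta / x.

Local Open Scope ereal_scope.

Definition distrib {d} {T : measurableType d} {R : realType}
  (mu : {measure set T -> \bar R}) (D : set T) (h : T -> \bar R) (y : R) : \bar R :=
  mu (D `&` [set x | y%:E < `|h x|]).

(* decreasing rearrangement: inf { y > 0 : distrib y <= t } (inf of empty set = +oo) *)
Definition rearr {d} {T : measurableType d} {R : realType}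
  (mu : {measure set T -> \bar R}) (D : set T) (h : T -> \bar R) (t : R) : \bar R :=
  ereal_inf [set y%:E | y in [set y : R | (0 < y)%R /\ distrib mu D h y <= t%:E]].

Definition avg {R : realType} (gstar : R -> \bar R) (t : R) : \bar R :=
  (t^-1)%:E * \int[lebesgue_measure]_(s in `]0%R, t[) gstar s.

Definition fstar {d} {T : measurableType d} {R : realType}
  (mu : {measure set T -> \bar R}) (f : T -> R) : R -> \bar R :=
  rearr mu setT (EFin \o f).

Definition fstarstar {d} {T : measurableType d} {R : realType}
  (mu : {measure set T -> \bar R}) (f : T -> R) : R -> \bar R :=
  avg (fstar mu f).

Definition gstar {R : realType} (g : R -> \bar R) : R -> \bar R :=
  rearr lebesgue_measure `]0%R, +oo[ g.

Definition gstarstar {R : realType} (g : R -> \bar R) : R -> \bar R :=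
  avg (gstar g).

Definition Pop {R : realType} (p0 : \bar R) (phi : R -> R) (g : R -> \bar R) (t : R)
  : \bar R :=
  (t `^ (- invp p0))%:E *
  \int[lebesgue_measure]_(s in `]0%R, t[)
     ((phi (1 - ln (s / t)) * s `^ (invp p0 - 1))%:E * g s).

Definition Qop {R : realType} (p1 : \bar R) (g : R -> \bar R) (t : R) : \bar R :=
  (t `^ (- invp p1))%:E *
  \int[lebesgue_measure]_(s in `]t, +oo[) ((s `^ (invp p1 - 1))%:E * g s).

Definition Rop {R : realType} (p0 p1 : \bar R) (phi : R -> R) (g : R -> \bar R) (t : R)
  : \bar R :=
  Pop p0 phi g t + Qop p1 g t.

From HB Require Import structures.
From mathcomp Require Import all_boot all_order all_algebra.
From mathcomp Require Import all_classical all_reals all_analysis.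
From mathcomp Require Import measurable_realfun lra.
Import Order.TTheory GRing.Theory Num.Theory.
Import numFieldNormedType.Exports.
Set Implicit Arguments. Unset Strict Implicit. Unset Printing Implicit Defensive.
Local Open Scope classical_set_scope.
Local Open Scope ring_scope.
Local Open Scope ereal_scope.

(* On nonnegative nonincreasing functions g, the average
   avg g t = t^-1 \int_0^t g and the operators P and Q are all dilation
   operators T g t = \int_B k(u) g(t u) du (substitute s = t u).  By Tonelli
   and \int_0^t g(s u) ds = t avg g (t u), one gets
   \int_0^t T g = t T (avg g) t.  Moreover T g is again nonincreasing, and a
   nonincreasing H has the same integrals \int_0^t as its rearrangement H^*,
   because H^* <= H while H s <= H^* (l s) for every l < 1.  As f^*_mu is
   nonincreasing, so is R (f^*_mu) = P (f^*_mu) + Q (f^*_mu), hence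
   avg (R (f^*_mu)) t = R (avg (f^*_mu)) t. *)

Section NonincreasingNonneg.
Variable R : realType.
Local Notation mR := (measurableTypeR R).

Record nonincreasing_nonneg (h : R -> \bar R) : Prop := NonincreasingNonneg {
  nonincreasing_ge0 : forall s, (0 < s)%R -> 0 <= h s;
  nonincreasing_le : forall s t, (0 < s)%R -> (s <= t)%R -> h t <= h s }.

Lemma eq_nonincreasing_nonneg (F G : R -> \bar R) : nonincreasing_nonneg G ->
  (forall t, (0 < t)%R -> F t = G t) -> nonincreasing_nonneg F.
Proof.
move=> [G0 Gle] FG; split=> [t t0|s t s0 st]; first by rewrite FG ?G0.
by rewrite !FG ?Gle // (lt_le_trans s0 st).
Qed.

Lemma subset_itv0_pos (t : R) : `]0%R, t[ `<=` `]0%R, +oo[.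
Proof. by apply: subset_itvl; rewrite bnd_simp. Qed.

Lemma subset_itvy_pos (t : R) : (0 <= t)%R -> `]t, +oo[ `<=` `]0%R, +oo[.
Proof. by move=> t0; apply: subset_itvr; rewrite bnd_simp. Qed.

Lemma measurable_fun_nonincreasing (D : set R) (h : R -> \bar R) : is_interval D ->
  (forall s t, D s -> D t -> (s <= t)%R -> h t <= h s) ->
  measurable_fun (D : set mR) h.
Proof.
move=> iD hD; apply: (measurability _ (ErealGenCInfty.measurableE R)).
move=> _ [_ [r ->] <-]; apply: is_interval_measurable.
move=> x y [Dx _] [Dy /=]; rewrite !in_itv /= !andbT => ry z /andP[xz zy].
have Dz : D z by apply: (iD x y); rewrite ?xz ?zy.
by split=> //=; rewrite in_itv /= andbT (le_trans ry) ?hD.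
Qed.

Lemma nonincreasing_nonneg_measurable (A : set R) h : nonincreasing_nonneg h ->
  measurable A -> A `<=` `]0%R, +oo[ -> measurable_fun (A : set mR) h.
Proof.
move=> [_ hle] mA A0; apply: (measurable_funS (measurable_itv _) A0).
apply: measurable_fun_nonincreasing; first exact: interval_is_interval.
by move=> s t; rewrite /= in_itv /= andbT => s0 _; exact: hle.
Qed.

Lemma nonincreasing_nonneg_measurable_comp d (T : measurableType d) (A : set T)
    (g : T -> mR) h : nonincreasing_nonneg h -> measurable A -> measurable_fun A g ->
  (forall x, A x -> (0 < g x)%R) -> measurable_fun A (h \o g).
Proof.
move=> hh mA mg g0; apply: (measurable_comp (measurable_itv `]0%R, +oo[)) => //.
- by move=> _ [x Ax <-]; rewrite /= in_itv /= andbT g0.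
- exact: nonincreasing_nonneg_measurable.
Qed.

Lemma rearr_ge0 d (T : measurableType d) (m : {measure set T -> \bar R}) D h t :
  0 <= rearr m D h t.
Proof. by apply: le_ereal_inf_tmp => _ [y [y0 _] <-]; rewrite lee_fin ltW. Qed.

Lemma rearr_le d (T : measurableType d) (m : {measure set T -> \bar R}) D h s t :
  (s <= t)%R -> rearr m D h t <= rearr m D h s.
Proof.
move=> st; apply: ereal_inf_le_tmp => _ [y [y0 hy] <-].
by exists y => //; split=> //; rewrite (le_trans hy) ?lee_fin.
Qed.

Lemma rearr_nonincreasing_nonneg d (T : measurableType d)
    (m : {measure set T -> \bar R}) D h : nonincreasing_nonneg (rearr m D h).
Proof. by split=> [s _|s t _]; [exact: rearr_ge0|exact: rearr_le]. Qed.

End NonincreasingNonneg.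

Section LebesgueDilation.
Variable R : realType.
Local Notation mR := (measurableTypeR R).
Local Notation lambda := (@lebesgue_measure R).

Local Close Scope ereal_scope.

Lemma preimage_mulr_itv_oc (c a b : R) : 0 < c ->
  ( *%R c) @^-1` `]a, b] = `]a / c, b / c]%classic.
Proof.
move=> c0; apply/seteqP; split=> x /=; rewrite !in_itv /=.
  by rewrite ltr_pdivrMr // ler_pdivlMr // ![x * c]mulrC.
by rewrite ltr_pdivrMr // ler_pdivlMr // ![x * c]mulrC.
Qed.

Lemma preimage_mulr_itv_oo (c a b : R) : 0 < c ->
  ( *%R c) @^-1` `]a, b[ = `]a / c, b / c[%classic.
Proof.
move=> c0; apply/seteqP; split=> x /=; rewrite !in_itv /=.
  by rewrite ltr_pdivrMr // ltr_pdivlMr // ![x * c]mulrC.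
by rewrite ltr_pdivrMr // ltr_pdivlMr // ![x * c]mulrC.
Qed.

Lemma preimage_mulr_itv_oy (c a : R) : 0 < c ->
  ( *%R c) @^-1` `]a, +oo[ = `]a / c, +oo[%classic.
Proof.
move=> c0; apply/seteqP; split=> x /=; rewrite !in_itv /= !andbT.
  by rewrite ltr_pdivrMr // mulrC.
by rewrite ltr_pdivrMr // mulrC.
Qed.

Local Open Scope ereal_scope.

Lemma pushforward_mulr_lebesgue (c : R) (A : set mR) : (0 < c)%R -> measurable A ->
  pushforward lambda ( *%R c : mR -> mR) A = (c^-1)%:E * lambda A.
Proof.
move=> c0 mA.
have mc : measurable_fun [set: mR] ( *%R c : mR -> mR) by exact: mulrl_measurable.
pose nu := mscale (NngNum (ltW c0))
  (measure_function_pushforward__canonical__measure_function_Measure lambda mc).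
have nuE : forall X, ocitv X -> lambda X = nu X.
  move=> _ [[a b] _ <-]; rewrite /nu /mscale /= /pushforward preimage_mulr_itv_oc //.
  rewrite !lebesgue_measure_itv /= !lte_fin ltr_pM2r ?invr_gt0 //.
  case: ifPn => ab; last by rewrite mule0.
  by rewrite -!EFinB -EFinM -mulrBl mulrCA mulfV ?gt_eqF // mulr1.
rewrite (lebesgue_measure_unique nuE mA) /nu /mscale /= muleA -EFinM.
by rewrite mulVf ?gt_eqF // mul1e.
Qed.

Lemma ge0_integral_scale (c : R) (D : set mR) (F : R -> \bar R) : (0 < c)%R ->
  measurable D -> measurable_fun D F -> (forall x, D x -> 0 <= F x) ->
  \int[lambda]_(x in D) F x = c%:E * \int[lambda]_(u in ( *%R c) @^-1` D) F (c * u)%R.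
Proof.
move=> c0 mD mF F0.
have mc : measurable_fun [set: mR] ( *%R c : mR -> mR) by exact: mulrl_measurable.
rewrite -(ge0_integral_pushforward mc lambda mD mF); last by move=> y /set_mem/F0.
have ic0 : (0 < c^-1)%R by rewrite invr_gt0.
have -> : \int[pushforward lambda ( *%R c : mR -> mR)]_(y in D) F y =
    \int[mscale (NngNum (ltW ic0)) lambda]_(y in D) F y.
  by apply: eq_measure_integral => A mA _; exact: pushforward_mulr_lebesgue.
by rewrite ge0_integral_mscale //= muleA -EFinM mulfV ?gt_eqF // mul1e.
Qed.

Lemma ge0_integral_itv0_scale (t : R) (F : R -> \bar R) : (0 < t)%R ->
  measurable_fun (`]0%R, t[ : set mR) F -> (forall x, (0 < x < t)%R -> 0 <= F x) ->
  \int[lambda]_(x in `]0%R, t[) F x = t%:E * \int[lambda]_(u in `]0%R, 1%R[) F (t * u)%R.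
Proof.
move=> t0 mF F0.
by rewrite (ge0_integral_scale t0) // preimage_mulr_itv_oo // mul0r divff ?gt_eqF.
Qed.

Lemma ge0_integral_itvy_scale (t : R) (F : R -> \bar R) : (0 < t)%R ->
  measurable_fun (`]t, +oo[ : set mR) F -> (forall x, (t < x)%R -> 0 <= F x) ->
  \int[lambda]_(x in `]t, +oo[) F x = t%:E * \int[lambda]_(u in `]1%R, +oo[) F (t * u)%R.
Proof.
move=> t0 mF F0.
rewrite (ge0_integral_scale t0) // ?preimage_mulr_itv_oy ?divff ?gt_eqF //.
by move=> x /=; rewrite in_itv /= andbT; exact: F0.
Qed.

End LebesgueDilation.

Section RearrangementOfNonincreasing.
Variable R : realType.
Local Notation mR := (measurableTypeR R).
Local Notation lambda := (@lebesgue_measure R).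
Variable H : R -> \bar R.
Hypothesis H_nin : nonincreasing_nonneg H.

Lemma lebesgue_measure_itv0 (s : R) : (0 < s)%R -> lambda `]0%R, s[ = s%:E.
Proof. by move=> s0; rewrite lebesgue_measure_itv /= lte_fin s0 -EFinB subr0. Qed.

Lemma measurable_superlevel_nonincreasing (y : R) :
  measurable (`]0%R, +oo[ `&` [set x : mR | y%:E < `|H x|]).
Proof.
apply: emeasurable_fun_o_infty => //; apply: measurableT_comp => //.
exact: nonincreasing_nonneg_measurable.
Qed.

Lemma gstar_le s : (0 < s)%R -> gstar H s <= H s.
Proof.
move=> s0; have [H0 Hle] := H_nin.
case Hs: (H s) (H0 s s0) => [r| |] // r0; last by rewrite leey.
apply/lee_addgt0Pr => e e0; apply: ereal_inf_lbound; exists (r + e)%R => //.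
split; first by rewrite ltr_pwDr.
have sub : `]0%R, +oo[ `&` [set x : mR | (r + e)%:E < `|H x|] `<=` `]0%R, s[.
  move=> x [/=]; rewrite !in_itv /= andbT => x0; rewrite gee0_abs ?H0 // x0 /= => rex.
  rewrite ltNge; apply/negP => sx; have := lt_le_trans rex (Hle _ _ s0 sx).
  by rewrite Hs lte_fin gtrDl ltNge ltW.
rewrite /distrib -(lebesgue_measure_itv0 s0) le_measure // inE //.
exact: measurable_superlevel_nonincreasing.
Qed.

Lemma le_gstar s s' : (0 < s')%R -> (s' < s)%R -> H s <= gstar H s'.
Proof.
move=> s'0 s's; have [H0 Hle] := H_nin; have s0 := lt_trans s'0 s's.
apply: le_ereal_inf_tmp => _ [y [y0 hy] <-]; rewrite leNgt; apply/negP => ys.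
have sub : `]0%R, s] `<=` `]0%R, +oo[ `&` [set x : mR | y%:E < `|H x|].
  move=> x /=; rewrite !in_itv /= andbT => /andP[x0 xs]; split=> //.
  by rewrite gee0_abs ?H0 // (lt_le_trans ys) ?Hle.
have : lambda `]0%R, s] <= s'%:E.
  apply: le_trans hy; rewrite /distrib le_measure // inE //.
  exact: measurable_superlevel_nonincreasing.
by rewrite lebesgue_measure_itv /= lte_fin s0 -EFinB subr0 lee_fin leNgt s's.
Qed.

Lemma integral_itv0_le_gstar t l : (0 < t)%R -> (0 < l < 1)%R ->
  l%:E * \int[lambda]_(s in `]0%R, t[) H s <= \int[lambda]_(s in `]0%R, t[) gstar H s.
Proof.
move=> t0 /andP[l0 l1]; have [H0 _] := H_nin.
have G_nin : nonincreasing_nonneg (gstar H) by exact: rearr_nonincreasing_nonneg.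
have itv0_gt0 s : `]0%R, t[%classic s -> (0 < s)%R by rewrite /= in_itv => /andP[].
apply: (@le_trans _ _ (l%:E * \int[lambda]_(s in `]0%R, t[) gstar H (l * s)%R)).
  apply: lee_wpmul2l; first by rewrite lee_fin ltW.
  apply: ge0_le_integral => //.
  - by move=> s /itv0_gt0; exact: H0.
  - by apply: nonincreasing_nonneg_measurable => //; exact: subset_itv0_pos.
  - apply: (nonincreasing_nonneg_measurable_comp (g := *%R l) G_nin) => //.
    by move=> s /itv0_gt0; exact: mulr_gt0.
  - by move=> s /itv0_gt0 s0; apply: le_gstar; rewrite ?mulr_gt0 ?gtr_pMl.
have -> : l%:E * \int[lambda]_(s in `]0%R, t[) gstar H (l * s)%R =
    \int[lambda]_(s in `]0%R, (l * t)%R[) gstar H s.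
  rewrite [RHS](ge0_integral_scale l0) ?preimage_mulr_itv_oo // ?mul0r.
  - by rewrite [(l * t / l)%R]mulrC mulKf ?gt_eqF.
  - by apply: nonincreasing_nonneg_measurable => //; exact: subset_itv0_pos.
  - by move=> s _; exact: rearr_ge0.
apply: ge0_subset_integral => //.
- by apply: nonincreasing_nonneg_measurable => //; exact: subset_itv0_pos.
- by move=> s _; exact: rearr_ge0.
- by apply: subset_itvl; rewrite bnd_simp ler_piMl // ltW.
Qed.

Lemma integral_itv0_gstar t : (0 < t)%R ->
  \int[lambda]_(s in `]0%R, t[) gstar H s = \int[lambda]_(s in `]0%R, t[) H s.
Proof.
move=> t0; have [H0 _] := H_nin.
have G_nin : nonincreasing_nonneg (gstar H) by exact: rearr_nonincreasing_nonneg.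
have itv0_gt0 s : `]0%R, t[%classic s -> (0 < s)%R by rewrite /= in_itv => /andP[].
have mH : measurable_fun (`]0%R, t[ : set mR) H.
  by apply: nonincreasing_nonneg_measurable => //; exact: subset_itv0_pos.
apply/eqP; rewrite eq_le; apply/andP; split.
  apply: ge0_le_integral => //; last by move=> s /itv0_gt0; exact: gstar_le.
  - by move=> s _; exact: rearr_ge0.
  - by apply: (nonincreasing_nonneg_measurable G_nin) => //; exact: subset_itv0_pos.
have intH_ge0 : 0 <= \int[lambda]_(s in `]0%R, t[) H s.
  by apply: integral_ge0 => s /itv0_gt0; exact: H0.
by apply/(lee_mul01Pr _ intH_ge0) => l; exact: integral_itv0_le_gstar.
Qed.

End RearrangementOfNonincreasing.

Lemma fubini_tonelli_setX d1 d2 (T1 : measurableType d1) (T2 : measurableType d2)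
    (R : realType) (m1 : {sigma_finite_measure set T1 -> \bar R})
    (m2 : {sigma_finite_measure set T2 -> \bar R}) (A : set T1) (B : set T2)
    (K : T1 * T2 -> \bar R) :
  measurable A -> measurable B -> measurable_fun (A `*` B) K ->
  (forall z, (A `*` B) z -> 0 <= K z) ->
  \int[m1]_(x in A) \int[m2]_(y in B) K (x, y) =
  \int[m2]_(y in B) \int[m1]_(x in A) K (x, y).
Proof.
move=> mA mB mK K0; pose K' := K \_ (A `*` B).
have mK' : measurable_fun setT K' by exact/(measurable_restrictT _ (measurableX mA mB)).
have K'1 x : \int[m2]_y K' (x, y) = ((fun x => \int[m2]_(y in B) K (x, y)) \_ A) x.
  rewrite /patch; case: ifPn => xA.
    by rewrite [RHS]integral_mkcond; apply: eq_integral => y _; rewrite /K' /patch in_setX xA.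
  by apply: integral0_eq => y _; rewrite /K' /patch in_setX (negbTE xA).
have K'2 y : \int[m1]_x K' (x, y) = ((fun y => \int[m1]_(x in A) K (x, y)) \_ B) y.
  rewrite /patch; case: ifPn => yB.
    by rewrite [RHS]integral_mkcond; apply: eq_integral => x _; rewrite /K' /patch in_setX yB andbT.
  by apply: integral0_eq => x _; rewrite /K' /patch in_setX (negbTE yB) andbF.
rewrite [LHS]integral_mkcond [RHS]integral_mkcond.
transitivity (\int[m1]_x \int[m2]_y K' (x, y)).
  by apply: eq_integral => x _; rewrite K'1.
transitivity (\int[m2]_y \int[m1]_x K' (x, y)).
  exact: fubini_tonelli mK' (erestrict_ge0 K0).
by apply: eq_integral => y _; rewrite K'2.
Qed.

Section DilationOperator.
Variable R : realType.
Local Notation mR := (measurableTypeR R).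
Local Notation lambda := (@lebesgue_measure R).

Record dilation_kernel (B : set R) (k : R -> R) : Prop := DilationKernel {
  dilation_kernel_measurable_set : measurable (B : set mR);
  dilation_kernel_pos : B `<=` `]0%R, +oo[;
  dilation_kernel_measurable : measurable_fun (B : set mR) k;
  dilation_kernel_ge0 : forall u, B u -> (0 <= k u)%R }.

Definition dilation_op (B : set R) (k : R -> R) (h : R -> \bar R) (t : R) : \bar R :=
  \int[lambda]_(u in B) ((k u)%:E * h (t * u)%R).

Variables (B : set R) (k : R -> R).
Hypothesis kB : dilation_kernel B k.

Lemma dilation_kernel_gt0 u : B u -> (0 < u)%R.
Proof. by move/(dilation_kernel_pos kB); rewrite /= in_itv /= andbT. Qed.

Lemma measurable_dilation_integrand h t : nonincreasing_nonneg h -> (0 < t)%R ->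
  measurable_fun (B : set mR) (fun u => (k u)%:E * h (t * u)%R).
Proof.
move=> hh t0; apply: emeasurable_funM.
  by apply/measurable_EFinP; exact: (dilation_kernel_measurable kB).
apply: (nonincreasing_nonneg_measurable_comp (g := *%R t) hh).
- exact: dilation_kernel_measurable_set kB.
- exact: mulrl_measurable.
- by move=> u /dilation_kernel_gt0; exact: mulr_gt0.
Qed.

Lemma dilation_integrand_ge0 h t u : nonincreasing_nonneg h -> (0 < t)%R -> B u ->
  0 <= (k u)%:E * h (t * u)%R.
Proof.
move=> hh t0 Bu; rewrite mule_ge0 ?lee_fin ?(dilation_kernel_ge0 kB) //.
by rewrite (nonincreasing_ge0 hh) // mulr_gt0 // dilation_kernel_gt0.
Qed.

Lemma dilation_op_nonincreasing_nonneg h : nonincreasing_nonneg h ->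
  nonincreasing_nonneg (dilation_op B k h).
Proof.
move=> hh; have mB := dilation_kernel_measurable_set kB.
split=> [t t0|s t s0 st].
  by apply: integral_ge0 => u Bu; exact: dilation_integrand_ge0.
have t0 := lt_le_trans s0 st.
apply: ge0_le_integral => //; last 3 first.
- exact: measurable_dilation_integrand.
- exact: measurable_dilation_integrand.
- move=> u Bu; have u0 := dilation_kernel_gt0 Bu.
  rewrite lee_wpmul2l ?lee_fin ?(dilation_kernel_ge0 kB) //.
  by apply: (nonincreasing_le hh); rewrite ?mulr_gt0 ?ler_pM2r.
- by move=> u Bu; exact: dilation_integrand_ge0.
Qed.

Lemma measurable_dilation_integrand_setX h t : nonincreasing_nonneg h ->
  measurable_fun (`]0%R, t[ `*` B : set (mR * mR))
    (fun z => (k z.2)%:E * h (z.1 * z.2)%R).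
Proof.
move=> hh; have mB := dilation_kernel_measurable_set kB.
have msnd : measurable_fun (`]0%R, t[ `*` B : set (mR * mR)) snd.
  by apply: (measurable_funS measurableT) => //; exact: measurable_snd.
apply: emeasurable_funM.
  apply/measurable_EFinP; apply: (measurable_comp (f := k) mB) => //.
  - by move=> _ [[x y] [_ By] <-].
  - exact: dilation_kernel_measurable kB.
apply: (nonincreasing_nonneg_measurable_comp (g := fun z : mR * mR => (z.1 * z.2)%R) hh).
- exact: measurableX.
- apply: (measurable_funM (f := fst)) => //.
  by apply: (measurable_funS measurableT) => //; exact: measurable_fst.
- by move=> [x y] [/andP[x0 _] /dilation_kernel_gt0 y0]; exact: mulr_gt0.
Qed.

End DilationOperator.

Section Average.
Variable R : realType.
Local Notation mR := (measurableTypeR R).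
Local Notation lambda := (@lebesgue_measure R).

Lemma dilation_kernel_cst1 : dilation_kernel `]0%R, 1%R[ (cst 1%R : R -> R).
Proof. by split=> //; exact: subset_itv0_pos. Qed.

Lemma avg_dilation_op (h : R -> \bar R) (t : R) : nonincreasing_nonneg h -> (0 < t)%R ->
  avg h t = dilation_op `]0%R, 1%R[ (cst 1%R) h t.
Proof.
move=> hh t0; rewrite /avg ge0_integral_itv0_scale //.
- rewrite muleA -EFinM mulVf ?gt_eqF // mul1e.
  by apply: eq_integral => u _; rewrite mul1e.
- by apply: nonincreasing_nonneg_measurable => //; exact: subset_itv0_pos.
- by move=> s /andP[s0 _]; exact: (nonincreasing_ge0 hh).
Qed.

Lemma avg_nonincreasing_nonneg (h : R -> \bar R) : nonincreasing_nonneg h ->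
  nonincreasing_nonneg (avg h).
Proof.
move=> hh; apply: (eq_nonincreasing_nonneg
  (dilation_op_nonincreasing_nonneg dilation_kernel_cst1 hh)) => t.
exact: avg_dilation_op.
Qed.

Lemma measurable_fun_itv0_dilate (h : R -> \bar R) (t u : R) : nonincreasing_nonneg h ->
  (0 < u)%R -> measurable_fun (`]0%R, t[ : set mR) (fun s => h (s * u)%R).
Proof.
move=> hh u0.
apply: (nonincreasing_nonneg_measurable_comp (g := fun s : mR => (s * u)%R) hh) => //.
  exact: mulrr_measurable.
by move=> s /andP[s0 _]; exact: mulr_gt0.
Qed.

Lemma integral_itv0_dilate (h : R -> \bar R) (t u : R) : nonincreasing_nonneg h ->
  (0 < t)%R -> (0 < u)%R ->
  \int[lambda]_(s in `]0%R, t[) h (s * u)%R = t%:E * avg h (t * u)%R.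
Proof.
move=> hh t0 u0; have tu0 : (0 < t * u)%R by exact: mulr_gt0.
rewrite (avg_dilation_op hh tu0) ge0_integral_itv0_scale //.
- by congr (_ * _); apply: eq_integral => v _; rewrite mul1e mulrAC.
- exact: measurable_fun_itv0_dilate.
- by move=> s /andP[s0 _]; rewrite (nonincreasing_ge0 hh) ?mulr_gt0.
Qed.

Lemma integral_itv0_dilation_op (B : set R) (k : R -> R) (h : R -> \bar R) (t : R) :
  dilation_kernel B k -> nonincreasing_nonneg h -> (0 < t)%R ->
  \int[lambda]_(s in `]0%R, t[) dilation_op B k h s = t%:E * dilation_op B k (avg h) t.
Proof.
move=> kB hh t0; have avg_nin := avg_nonincreasing_nonneg hh.
have mB := dilation_kernel_measurable_set kB.
rewrite /dilation_op (fubini_tonelli_setX lambda lambda (measurable_itv _) mB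
  (measurable_dilation_integrand_setX (t:=t) kB hh)); last first.
  by move=> [x y] [/andP[x0 _] /= By] /=; exact: (dilation_integrand_ge0 kB).
rewrite -ge0_integralZl ?lee_fin ?ltW //.
- apply: eq_integral => u /[!inE] Bu /=; have u0 := dilation_kernel_gt0 kB Bu.
  rewrite ge0_integralZl ?lee_fin ?(dilation_kernel_ge0 kB) //.
  + by rewrite integral_itv0_dilate // muleCA.
  + exact: measurable_fun_itv0_dilate.
  + by move=> s /andP[s0 _]; rewrite (nonincreasing_ge0 hh) ?mulr_gt0.
- exact: (measurable_dilation_integrand kB avg_nin t0).
- by move=> u Bu; exact: (dilation_integrand_ge0 kB avg_nin t0 Bu).
Qed.

End Average.

Definition Pkernel (R : realType) (p0 : \bar R) (phi : R -> R) (t s : R) : R :=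
  (phi (1 - ln (s / t)) * s `^ (invp p0 - 1))%R.

Definition Qkernel (R : realType) (p1 : \bar R) (s : R) : R := (s `^ (invp p1 - 1))%R.

Section Kernels.
Variable R : realType.
Local Notation mR := (measurableTypeR R).
Local Close Scope ereal_scope.

Lemma powRN_mul_powRB1 (t a : R) : 0 < t -> t `^ (- a) * t * t `^ (a - 1) = 1.
Proof.
move=> t0; rewrite -{2}(powRr1 (ltW t0)) -!powRD ?(gt_eqF t0) ?implybT //.
by rewrite [X in t `^ X](_ : _ = 0) ?powRr0 //; lra.
Qed.

Lemma Qkernel_scale (p1 : \bar R) (t u : R) : 0 < t -> 0 < u ->
  Qkernel p1 (t * u) = t `^ (invp p1 - 1) * Qkernel p1 u.
Proof. by move=> t0 u0; rewrite /Qkernel powRM ?ltW. Qed.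

Lemma dilation_kernel_Qkernel (p1 : \bar R) : dilation_kernel `]1, +oo[ (Qkernel p1).
Proof.
split=> //; first exact: subset_itvy_pos.
- by apply: (measurable_funS measurableT) => //; exact: measurable_powR.
- by move=> u _; exact: powR_ge0.
Qed.

Variables (p0 : \bar R) (phi : R -> R).
Hypothesis phi_ge0 : forall x, 1 < x -> 0 <= phi x.
Hypothesis phi_measurable : measurable_fun (`]1, +oo[ : set mR) phi.

Lemma Pkernel_arg_gt1 (t s : R) : 0 < s < t -> 1 < 1 - ln (s / t).
Proof.
move=> /andP[s0 st]; have t0 := lt_trans s0 st.
by rewrite ltrDl oppr_gt0 ln_lt0 // divr_gt0 //= ltr_pdivrMr // mul1r.
Qed.

Lemma Pkernel_ge0 (t s : R) : 0 < s < t -> 0 <= Pkernel p0 phi t s.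
Proof. by move=> sI; rewrite mulr_ge0 ?powR_ge0 ?phi_ge0 ?Pkernel_arg_gt1. Qed.

Lemma measurable_Pkernel (t : R) : 0 < t ->
  measurable_fun (`]0, t[ : set mR) (Pkernel p0 phi t).
Proof.
move=> t0; apply: measurable_funM.
  apply: (measurable_comp (measurable_itv `]1, +oo[)) => //.
  - by move=> _ [s sI <-]; rewrite /= in_itv /= andbT Pkernel_arg_gt1.
  - apply: measurable_funB => //; apply: measurableT_comp; first exact: measurable_ln.
    exact: mulrr_measurable.
by apply: (measurable_funS measurableT) => //; exact: measurable_powR.
Qed.

Lemma Pkernel_scale (t u : R) : 0 < t -> 0 < u ->
  Pkernel p0 phi t (t * u) = t `^ (invp p0 - 1) * Pkernel p0 phi 1 u.
Proof.
move=> t0 u0; rewrite /Pkernel [t * u]mulrC mulfK ?gt_eqF // divr1 mulrC powRM ?ltW //.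
by rewrite mulrCA mulrC.
Qed.

Lemma dilation_kernel_Pkernel : dilation_kernel `]0, 1[ (Pkernel p0 phi 1).
Proof.
split=> //; first exact: subset_itv0_pos.
- exact: measurable_Pkernel.
- by move=> u; exact: Pkernel_ge0.
Qed.

End Kernels.

Section Operators.
Variable R : realType.
Local Notation mR := (measurableTypeR R).
Local Notation lambda := (@lebesgue_measure R).
Variables (p0 p1 : \bar R) (phi : R -> R).
Hypothesis phi_ge0 : forall x, (1 < x)%R -> (0 <= phi x)%R.
Hypothesis phi_measurable : measurable_fun (`]1%R, +oo[ : set mR) phi.

Let kP := dilation_kernel_Pkernel p0 phi_ge0 phi_measurable.
Let kQ := dilation_kernel_Qkernel p1.

Lemma Pop_dilation h t : nonincreasing_nonneg h -> (0 < t)%R ->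
  Pop p0 phi h t = dilation_op `]0%R, 1%R[ (Pkernel p0 phi 1) h t.
Proof.
move=> hh t0; have -> : Pop p0 phi h t = (t `^ (- invp p0))%:E *
    \int[lambda]_(s in `]0%R, t[) ((Pkernel p0 phi t s)%:E * h s) by [].
rewrite ge0_integral_itv0_scale //.
- have -> : \int[lambda]_(u in `]0%R, 1%R[) ((Pkernel p0 phi t (t * u))%:E * h (t * u)%R) =
      (t `^ (invp p0 - 1))%:E * dilation_op `]0%R, 1%R[ (Pkernel p0 phi 1) h t.
    rewrite -ge0_integralZl ?lee_fin ?powR_ge0 //.
    + apply: eq_integral => u /[!inE] /andP[u0 _].
      by rewrite Pkernel_scale // EFinM muleA.
    + exact: (measurable_dilation_integrand kP hh t0).
    + by move=> u uI; exact: (dilation_integrand_ge0 kP hh t0 uI).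
  by rewrite !muleA -!EFinM powRN_mul_powRB1 // mul1e.
- apply: emeasurable_funM.
    by apply/measurable_EFinP; exact: measurable_Pkernel.
  by apply: nonincreasing_nonneg_measurable => //; exact: subset_itv0_pos.
- move=> s sI; rewrite mule_ge0 ?lee_fin ?Pkernel_ge0 //.
  by case/andP: sI => s0 _; exact: (nonincreasing_ge0 hh).
Qed.

Lemma Qop_dilation h t : nonincreasing_nonneg h -> (0 < t)%R ->
  Qop p1 h t = dilation_op `]1%R, +oo[ (Qkernel p1) h t.
Proof.
move=> hh t0; have -> : Qop p1 h t = (t `^ (- invp p1))%:E *
    \int[lambda]_(s in `]t, +oo[) ((Qkernel p1 s)%:E * h s) by [].
rewrite ge0_integral_itvy_scale //.
- have -> : \int[lambda]_(u in `]1%R, +oo[) ((Qkernel p1 (t * u))%:E * h (t * u)%R) =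
      (t `^ (invp p1 - 1))%:E * dilation_op `]1%R, +oo[ (Qkernel p1) h t.
    rewrite -ge0_integralZl ?lee_fin ?powR_ge0 //.
    + apply: eq_integral => u /[!inE]; rewrite /= in_itv /= andbT => u1.
      by rewrite Qkernel_scale ?(lt_trans ltr01 u1) // EFinM muleA.
    + exact: (measurable_dilation_integrand kQ hh t0).
    + by move=> u uI; exact: (dilation_integrand_ge0 kQ hh t0 uI).
  by rewrite !muleA -!EFinM powRN_mul_powRB1 // mul1e.
- apply: emeasurable_funM.
    apply/measurable_EFinP; apply: (measurable_funS measurableT) => //.
    exact: measurable_powR.
  by apply: nonincreasing_nonneg_measurable => //; exact: subset_itvy_pos (ltW t0).
- move=> s ts; rewrite mule_ge0 ?lee_fin ?powR_ge0 //.
  exact: (nonincreasing_ge0 hh) (lt_trans t0 ts).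
Qed.

Lemma Pop_nonincreasing_nonneg h : nonincreasing_nonneg h ->
  nonincreasing_nonneg (Pop p0 phi h).
Proof.
move=> hh; apply: (eq_nonincreasing_nonneg
  (dilation_op_nonincreasing_nonneg kP hh)) => t.
exact: Pop_dilation.
Qed.

Lemma Qop_nonincreasing_nonneg h : nonincreasing_nonneg h ->
  nonincreasing_nonneg (Qop p1 h).
Proof.
move=> hh; apply: (eq_nonincreasing_nonneg
  (dilation_op_nonincreasing_nonneg kQ hh)) => t.
exact: Qop_dilation.
Qed.

Lemma Rop_nonincreasing_nonneg h : nonincreasing_nonneg h ->
  nonincreasing_nonneg (Rop p0 p1 phi h).
Proof.
move=> hh; have [P0 Ple] := Pop_nonincreasing_nonneg hh.
have [Q0 Qle] := Qop_nonincreasing_nonneg hh.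
split=> [t t0|s t s0 st]; first by rewrite adde_ge0 ?P0 ?Q0.
by rewrite leeD ?Ple ?Qle.
Qed.

Lemma integral_itv0_Pop h t : nonincreasing_nonneg h -> (0 < t)%R ->
  \int[lambda]_(s in `]0%R, t[) Pop p0 phi h s = t%:E * Pop p0 phi (avg h) t.
Proof.
move=> hh t0; rewrite (Pop_dilation (avg_nonincreasing_nonneg hh) t0).
rewrite -(integral_itv0_dilation_op kP hh t0).
by apply: eq_integral => s /[!inE] /andP[s0 _]; exact: Pop_dilation.
Qed.

Lemma integral_itv0_Qop h t : nonincreasing_nonneg h -> (0 < t)%R ->
  \int[lambda]_(s in `]0%R, t[) Qop p1 h s = t%:E * Qop p1 (avg h) t.
Proof.
move=> hh t0; rewrite (Qop_dilation (avg_nonincreasing_nonneg hh) t0).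
rewrite -(integral_itv0_dilation_op kQ hh t0).
by apply: eq_integral => s /[!inE] /andP[s0 _]; exact: Qop_dilation.
Qed.

Lemma gstarstar_Rop h t : nonincreasing_nonneg h -> (0 < t)%R ->
  gstarstar (Rop p0 p1 phi h) t = Rop p0 p1 phi (avg h) t.
Proof.
move=> hh t0; have avg_nin := avg_nonincreasing_nonneg hh.
have P_nin := Pop_nonincreasing_nonneg hh; have Q_nin := Qop_nonincreasing_nonneg hh.
rewrite /gstarstar {1}/avg (integral_itv0_gstar (Rop_nonincreasing_nonneg hh) t0).
rewrite ge0_integralD //.
- rewrite integral_itv0_Pop // integral_itv0_Qop // -ge0_muleDr; last 2 first.
  + exact: (nonincreasing_ge0 (Pop_nonincreasing_nonneg avg_nin)).
  + exact: (nonincreasing_ge0 (Qop_nonincreasing_nonneg avg_nin)).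
  by rewrite muleA -EFinM mulVf ?gt_eqF // mul1e.
- by move=> s /andP[s0 _]; exact: (nonincreasing_ge0 P_nin).
- by apply: (nonincreasing_nonneg_measurable P_nin) => //; exact: subset_itv0_pos.
- by move=> s /andP[s0 _]; exact: (nonincreasing_ge0 Q_nin).
- by apply: (nonincreasing_nonneg_measurable Q_nin) => //; exact: subset_itv0_pos.
Qed.

End Operators.

Lemma admissible_measurable (R : realType) (phi : R -> R) : admissible phi ->
  measurable_fun (`]1%R, +oo[ : set (measurableTypeR R)) phi.
Proof.
move=> [_ [_ [_ [dphi [phi_der _]]]]].
apply: open_continuous_measurable_fun; first exact: interval_open.
move=> x; rewrite inE /= in_itv /= andbT => x1; have := phi_der x x1.
by move=> ?; apply/differentiable_continuous/derivable1_diffP; exact: ex_derive.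
Qed.

Theorem mainTheorem2 (R : realType) (p0 p1 : \bar R) (phi : R -> R)
  (d : measure_display) (T : measurableType d) (mu : {measure set T -> \bar R})
  (f : T -> R) (t : R) :
  1 <= p0 -> 1 <= p1 -> admissible phi ->
  measurable_fun setT f -> (0 < t)%R ->
  gstarstar (Rop p0 p1 phi (fstar mu f)) t = Rop p0 p1 phi (fstarstar mu f) t.
Proof.
move=> _ _ phi_adm _ t0.
have phi_ge0 x : (1 < x)%R -> (0 <= phi x)%R.
  by case: phi_adm => _ [phi_ge1 _] x1; rewrite (le_trans ler01) ?phi_ge1 ?ltW.
apply: (gstarstar_Rop p0 p1 phi_ge0 (admissible_measurable phi_adm) _ t0).
exact: rearr_nonincreasing_nonneg.
Qed.
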